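(* Let $\mathcal B$ be a finite set of finite algebras of signature $F$. Then the following are equivalent: (1) the algebras in $\mathcal B$ are quasi-primal and share a common ternary discriminator term; (2) for all $n\in\mathbb N$, if $\{u_A\colon A^n\to A\mid \mathbf A\in\mathcal B\}$ is a family of $n$-ary operations indexed by $\mathcal B$ such that, for all $\mathbf A_1,\mathbf A_2\in\mathcal B$, the pair $(u_{A_1},u_{A_2})$ preserves the graph of every partial isomorphism between $\mathbf A_1$ and $\mathbf A_2$, then there is a term $t$ in the signature $F$ with $u_A=t^{\mathbf A}$ for all $\mathbf A\in\mathcal B$; (3) $\mathcal B$ generates a congruence-distributive and congruence-permutable variety and, for all $\mathbf A\in\mathcal B$, every non-trivial subalgebra of $\mathbf A$ is simple; (4) $\mathcal B$ has a majority term and, for all $\mathbf A_1,\mathbf A_2\in\mathcal B$, every subalgebra of $\mathbf A_1\times\mathbf A_2$ is either the product of a subalgebra of $\mathbf A_1$ and a subalgebra of $\mathbf A_2$ or is the graph of a partial isomorphism between $\mathbf A_1$ and $\mathbf A_2$.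
   Context: The ternary discriminator on a set $A$ is $\tau(x,y,z)=x$ if $x\ne y$, $=z$ if $x=y$. A finite algebra is quasi-primal if $\tau$ is a term function of it; algebras share a common ternary discriminator term if a single ternary term induces $\tau$ on each. For $u_A\colon A^n\to A$, $u_B\colon B^n\to B$ and $r\subseteq A\times B$, the pair $(u_A,u_B)$ preserves $r$ if $(a_1,b_1),\dots,(a_n,b_n)\in r$ implies $(u_A(a_1,\dots,a_n),u_B(b_1,\dots,b_n))\in r$. A partial isomorphism between $\mathbf A$ and $\mathbf B$ is an isomorphism from a subalgebra of $\mathbf A$ onto a subalgebra of $\mathbf B$. $\mathcal B$ has a majority term if there is a ternary term $m$ with $m^{\mathbf A}(x,x,y)=m^{\mathbf A}(x,y,x)=m^{\mathbf A}(y,x,x)=x$ for all $\mathbf A\in\mathcal B$. *)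

From mathcomp Require Import all_boot.
Set Implicit Arguments. Unset Strict Implicit. Unset Printing Implicit Defensive.

Record signature := Signature { op_sym : Type; arity : op_sym -> nat }.

Record algebra (F : signature) := Algebra {
  carrier :> Type;
  interp : forall f : op_sym F, ('I_(arity f) -> carrier) -> carrier }.
Arguments Algebra {F} carrier interp.
Arguments interp {F} _ f _.

Inductive term (F : signature) (X : Type) : Type :=
  | Var : X -> term F X
  | App : forall f : op_sym F, ('I_(arity f) -> term F X) -> term F X.
Arguments Var {F X} x.
Arguments App {F X} f ts.

Fixpoint eval (F : signature) (X : Type) (A : algebra F) (v : X -> A)
    (t : term F X) : A :=
  match t with
  | Var x => v x
  | App f ts => interp A f (fun i => @eval F X A v (ts i))
  end.
Arguments eval {F X} A v t.

Definition finite_algebra (F : signature) (A : algebra F) : Prop :=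
  inhabited A /\ exists (n : nat) (e : 'I_n -> A), forall x : A, exists i, e i = x.
Arguments finite_algebra {F} A.

Definition v3 (A : Type) (x y z : A) : 'I_3 -> A :=
  fun i => match val i with 0 => x | 1 => y | _ => z end.
Arguments v3 {A} x y z.

Definition ternary_op (F : signature) (A : algebra F) (t : term F 'I_3)
    (x y z : A) : A := eval A (v3 x y z) t.
Arguments ternary_op {F} A t x y z.

Definition is_discriminator (A : Type) (g : A -> A -> A -> A) : Prop :=
  forall x y z, (x <> y -> g x y z = x) /\ (x = y -> g x y z = z).
Arguments is_discriminator {A} g.

Definition quasi_primal (F : signature) (A : algebra F) : Prop :=
  finite_algebra A /\ exists t : term F 'I_3, is_discriminator (ternary_op A t).
Arguments quasi_primal {F} A.

(** Subuniverses (possibly empty) = carriers of subalgebras. *)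
Definition subuniverse (F : signature) (A : algebra F) (S : A -> Prop) : Prop :=
  forall f (args : 'I_(arity f) -> A), (forall i, S (args i)) -> S (interp A f args).
Arguments subuniverse {F} A S.

Definition sub_alg (F : signature) (A : algebra F) (S : A -> Prop)
    (HS : subuniverse A S) : algebra F :=
  Algebra {x : A | S x}
    (fun f args => exist _ (interp A f (fun i => sval (args i)))
                          (HS f _ (fun i => proj2_sig (args i)))).
Arguments sub_alg {F A S} HS.

Definition prod_alg (F : signature) (A B : algebra F) : algebra F :=
  Algebra (A * B)%type
    (fun f args => (interp A f (fun i => (args i).1), interp B f (fun i => (args i).2))).
Arguments prod_alg {F} A B.

Definition is_partial_iso (F : signature) (A B : algebra F)
    (S1 : A -> Prop) (S2 : B -> Prop) (h : A -> B) : Prop :=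
  [/\ subuniverse A S1 /\ subuniverse B S2,
      (forall x, S1 x -> S2 (h x)),
      (forall x y, S1 x -> S1 y -> h x = h y -> x = y),
      (forall y, S2 y -> exists2 x, S1 x & h x = y) &
      (forall f (args : 'I_(arity f) -> A), (forall i, S1 (args i)) ->
          h (interp A f args) = interp B f (fun i => h (args i)))].
Arguments is_partial_iso {F A B} S1 S2 h.

Definition partial_iso_graph (F : signature) (A B : algebra F)
    (r : A -> B -> Prop) : Prop :=
  exists (S1 : A -> Prop) (S2 : B -> Prop) (h : A -> B),
    is_partial_iso S1 S2 h /\ (forall a b, r a b <-> S1 a /\ h a = b).
Arguments partial_iso_graph {F A B} r.

Definition preserves (n : nat) (A B : Type) (uA : ('I_n -> A) -> A)
    (uB : ('I_n -> B) -> B) (r : A -> B -> Prop) : Prop :=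
  forall (a : 'I_n -> A) (b : 'I_n -> B),
    (forall i, r (a i) (b i)) -> r (uA a) (uB b).
Arguments preserves {n A B} uA uB r.

Definition congruence (F : signature) (A : algebra F) (th : A -> A -> Prop) : Prop :=
  [/\ (forall x, th x x), (forall x y, th x y -> th y x),
      (forall x y z, th x y -> th y z -> th x z) &
      (forall f (a b : 'I_(arity f) -> A), (forall i, th (a i) (b i)) ->
          th (interp A f a) (interp A f b))].
Arguments congruence {F} A th.

Definition cong_join (F : signature) (A : algebra F) (al be : A -> A -> Prop)
    (x y : A) : Prop :=
  forall th, congruence A th -> (forall u v, al u v -> th u v) ->
    (forall u v, be u v -> th u v) -> th x y.
Arguments cong_join {F} A al be x y.

Definition cong_meet (A : Type) (al be : A -> A -> Prop) (x y : A) : Prop :=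
  al x y /\ be x y.
Arguments cong_meet {A} al be x y.

Definition cong_distributive (F : signature) (A : algebra F) : Prop :=
  forall al be ga, congruence A al -> congruence A be -> congruence A ga ->
    forall x y, cong_meet al (cong_join A be ga) x y <->
                cong_join A (cong_meet al be) (cong_meet al ga) x y.
Arguments cong_distributive {F} A.

Definition cong_permutable (F : signature) (A : algebra F) : Prop :=
  forall al be, congruence A al -> congruence A be ->
    forall x y, (exists z, al x z /\ be z y) <-> (exists z, be x z /\ al z y).
Arguments cong_permutable {F} A.

Definition simple (F : signature) (A : algebra F) : Prop :=
  (exists x y : A, x <> y) /\
  forall th, congruence A th -> (forall x y, th x y -> x = y) \/ (forall x y, th x y).
Arguments simple {F} A.

(** Identities and the variety generated by a family of algebras
    (= Mod Id(B), the class of all algebras satisfying every identity of B). *)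
Definition satisfies (F : signature) (A : algebra F) (n : nat)
    (s t : term F 'I_n) : Prop :=
  forall v : 'I_n -> A, eval A v s = eval A v t.
Arguments satisfies {F} A {n} s t.

Definition in_variety_gen (F : signature) (I : Type) (B : I -> algebra F)
    (C : algebra F) : Prop :=
  forall n (s t : term F 'I_n), (forall i, satisfies (B i) s t) -> satisfies C s t.
Arguments in_variety_gen {F I} B C.

Definition majority_term (F : signature) (I : Type) (B : I -> algebra F) : Prop :=
  exists m : term F 'I_3, forall i (x y : B i),
    [/\ ternary_op (B i) m x x y = x, ternary_op (B i) m x y x = x &
        ternary_op (B i) m y x x = x].
Arguments majority_term {F I} B.

Definition cond1 (F : signature) (I : Type) (B : I -> algebra F) : Prop :=
  (forall i, quasi_primal (B i)) /\
  exists t : term F 'I_3, forall i, is_discriminator (ternary_op (B i) t).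
Arguments cond1 {F I} B.

Definition cond2 (F : signature) (I : Type) (B : I -> algebra F) : Prop :=
  forall (n : nat) (u : forall i, ('I_n -> B i) -> B i),
    (forall i j (r : B i -> B j -> Prop), partial_iso_graph r -> preserves (u i) (u j) r) ->
    exists t : term F 'I_n, forall i (a : 'I_n -> B i), u i a = eval (B i) a t.
Arguments cond2 {F I} B.

Definition cond3 (F : signature) (I : Type) (B : I -> algebra F) : Prop :=
  (forall C : algebra F, in_variety_gen B C -> cong_distributive C /\ cong_permutable C) /\
  (forall i (S : B i -> Prop) (HS : subuniverse (B i) S),
     (exists x y, [/\ S x, S y & x <> y]) -> simple (sub_alg HS)).
Arguments cond3 {F I} B.

Definition cond4 (F : signature) (I : Type) (B : I -> algebra F) : Prop :=
  majority_term B /\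
  forall i j (S : prod_alg (B i) (B j) -> Prop), subuniverse _ S ->
    (exists (S1 : B i -> Prop) (S2 : B j -> Prop),
        [/\ subuniverse _ S1, subuniverse _ S2 & forall a b, S (a, b) <-> S1 a /\ S2 b])
    \/ partial_iso_graph (fun (a : B i) (b : B j) => S (a, b)).
Arguments cond4 {F I} B.

(* A common discriminator t makes every subuniverse of a product of two members
   rectangular (t((a,b),(a',b),(a',b')) = (a,b')), every non-trivial subalgebra
   simple, and yields the majority term t(x, t(x,y,z), z); by Goursat's argument a
   rectangular subuniverse of A1 x A2 whose factors have only simple subalgebras is
   a product or the graph of a partial isomorphism, giving (1) => (4).
   Under (4), operations preserving graphs of partial isomorphisms preserve every
   subuniverse of a product of two members, so they agree with a term on any two
   points; the majority term glues such terms together (Baker-Pixley) to one that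
   agrees on the finitely many points of all members, giving (2). Conversely the
   discriminator preserves such graphs, since partial isomorphisms preserve and
   reflect equality, so (2) => (1).
   The discriminator is a Maltsev term and gives a majority term, whence
   (1) => (3); under (3), congruence distributivity and permutability of the free
   algebra on three generators produce a majority term, and permutability of a
   subalgebra of a product forces it to be rectangular, whence (3) => (4). *)

From mathcomp Require Import all_boot.
From Stdlib Require Import FunctionalExtensionality ProofIrrelevance ClassicalEpsilon Classical.
From Stdlib Require List.
Set Implicit Arguments. Unset Strict Implicit. Unset Printing Implicit Defensive.

Section Terms.
Variable F : signature.

Fixpoint subst (X Y : Type) (s : X -> term F Y) (t : term F X) : term F Y :=
  match t with Var x => s x | App f ts => App f (fun k => subst s (ts k)) end.

Lemma eq_eval X (A : algebra F) (v w : X -> A) t :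
  (forall x, v x = w x) -> eval A v t = eval A w t.
Proof. by move=> /functional_extensionality ->. Qed.

Lemma eval_subst X Y (A : algebra F) (v : Y -> A) (s : X -> term F Y) t :
  eval A v (subst s t) = eval A (fun x => eval A v (s x)) t.
Proof.
elim: t => [x|f ts IH] //=.
by congr (interp A f); apply: functional_extensionality => k; exact: IH.
Qed.

Lemma congruence_eval X (A : algebra F) th (a b : X -> A) t :
  congruence A th -> (forall x, th (a x) (b x)) -> th (eval A a t) (eval A b t).
Proof. by case=> _ _ _ Hc H; elim: t => [x|f ts IH] /=; [exact: H | exact: Hc]. Qed.

Lemma subuniverse_eval X (A : algebra F) S (a : X -> A) t :
  subuniverse A S -> (forall x, S (a x)) -> S (eval A a t).
Proof. by move=> HS H; elim: t => [x|f ts IH] /=; [exact: H | exact: HS]. Qed.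

Lemma eval_prod_alg X (A B : algebra F) (v : X -> prod_alg A B) t :
  eval (prod_alg A B) v t = (eval A (fun x => (v x).1) t, eval B (fun x => (v x).2) t).
Proof.
elim: t => [x|f ts IH] /=; first by case: (v x).
by congr pair; congr (interp _ f); apply: functional_extensionality => k; rewrite IH.
Qed.

Lemma eval_sub_alg X (A : algebra F) S (HS : subuniverse A S) (v : X -> sub_alg HS) t :
  sval (eval (sub_alg HS) v t) = eval A (fun x => sval (v x)) t.
Proof.
elim: t => [x|f ts IH] //=.
by congr (interp _ f); apply: functional_extensionality => k; rewrite IH.
Qed.

Lemma sub_alg_inj (A : algebra F) S (HS : subuniverse A S) (p q : sub_alg HS) :
  sval p = sval q -> p = q.
Proof. exact: (@eq_sig_hprop A S (fun x => proof_irrelevance (S x)) p q). Qed.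

End Terms.

Definition o0 : 'I_3 := @Ordinal 3 0 isT.
Definition o1 : 'I_3 := @Ordinal 3 1 isT.
Definition o2 : 'I_3 := @Ordinal 3 2 isT.

Lemma v3_map (A B : Type) (g : A -> B) x y z k : g (v3 x y z k) = v3 (g x) (g y) (g z) k.
Proof. by rewrite /v3; case: (val k) => [|[|[|m]]]. Qed.

Lemma v3_rel (A B : Type) (R : A -> B -> Prop) x y z x' y' z' :
  R x x' -> R y y' -> R z z' -> forall k, R (v3 x y z k) (v3 x' y' z' k).
Proof. by move=> ? ? ? k; rewrite /v3; case: (val k) => [|[|[|m]]]. Qed.

Section Ternary.
Variables (F : signature) (A : algebra F).

Lemma eval_subst_v3 X (a : X -> A) (m : term F 'I_3) s0 s1 s2 :
  eval A a (subst (v3 s0 s1 s2) m) = ternary_op A m (eval A a s0) (eval A a s1) (eval A a s2).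
Proof. by rewrite eval_subst; apply: eq_eval => k; rewrite (v3_map (eval A a)). Qed.

Lemma congruence_ternary th t x y z x' y' z' : congruence A th ->
  th x x' -> th y y' -> th z z' -> th (ternary_op A t x y z) (ternary_op A t x' y' z').
Proof. by move=> Hth Hx Hy Hz; apply: congruence_eval Hth _; exact: v3_rel. Qed.

Lemma subuniverse_ternary S t x y z : subuniverse A S -> S x -> S y -> S z ->
  S (ternary_op A t x y z).
Proof.
by move=> HS Hx Hy Hz; apply: subuniverse_eval HS _; exact: (@v3_rel _ _ (fun a _ => S a) _ _ _ x y z).
Qed.

Lemma ternary_prod_alg (B : algebra F) t (p q r : prod_alg A B) :
  ternary_op (prod_alg A B) t p q r = (ternary_op A t p.1 q.1 r.1, ternary_op B t p.2 q.2 r.2).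
Proof.
by rewrite /ternary_op eval_prod_alg; congr pair; apply: eq_eval => k; rewrite (v3_map fst, v3_map snd).
Qed.

Lemma ternary_sub_alg S (HS : subuniverse A S) t (p q r : sub_alg HS) :
  sval (ternary_op (sub_alg HS) t p q r) = ternary_op A t (sval p) (sval q) (sval r).
Proof. by rewrite /ternary_op eval_sub_alg; apply: eq_eval => k; rewrite (v3_map sval). Qed.

End Ternary.

Definition rectangular (A B : Type) (S : A * B -> Prop) :=
  forall a a' b b', S (a, b) -> S (a', b) -> S (a', b') -> S (a, b').

Definition subalgebras_simple (F : signature) (A : algebra F) :=
  forall (S : A -> Prop) (HS : subuniverse A S),
    (exists x y, [/\ S x, S y & x <> y]) -> simple (sub_alg HS).

Definition product_or_partial_iso (F : signature) (A B : algebra F)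
    (S : prod_alg A B -> Prop) :=
  (exists (S1 : A -> Prop) (S2 : B -> Prop),
      [/\ subuniverse _ S1, subuniverse _ S2 & forall a b, S (a, b) <-> S1 a /\ S2 b])
  \/ partial_iso_graph (fun (a : A) (b : B) => S (a, b)).

Section Goursat.
Variables (F : signature) (A B : algebra F) (S : prod_alg A B -> Prop).
Hypothesis HS : subuniverse _ S.

Definition proj1_set (a : A) := exists b, S (a, b).
Definition proj2_set (b : B) := exists a, S (a, b).

Lemma subuniverse_proj1 : subuniverse A proj1_set.
Proof.
move=> f args /choice [bs Hb]; exists (interp B f bs).
exact: (@HS f (fun k => (args k, bs k)) Hb).
Qed.

Lemma subuniverse_proj2 : subuniverse B proj2_set.
Proof.
move=> f args /choice [as_ Ha]; exists (interp A f as_).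
exact: (@HS f (fun k => (as_ k, args k)) Ha).
Qed.

Hypothesis rectS : rectangular S.

Definition fibre_link (p q : sub_alg subuniverse_proj1) :=
  exists b, S (sval p, b) /\ S (sval q, b).

Lemma fibre_link_congruence : congruence _ fibre_link.
Proof.
split.
- by case=> x [c Hc]; exists c.
- by move=> p q [c [H H']]; exists c.
- by move=> p q r [c [H H']] [d [K K']]; exists d; split => //; exact: rectS H H' K.
- move=> f p q /choice [bs Hb]; exists (interp B f bs); split.
  + exact: (@HS f (fun k => (sval (p k), bs k)) (fun k => proj1 (Hb k))).
  + exact: (@HS f (fun k => (sval (q k), bs k)) (fun k => proj2 (Hb k))).
Qed.

Lemma rectangular_product_of_projections : subalgebras_simple A ->
  forall a a' b, S (a, b) -> S (a', b) -> a <> a' ->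
  forall x y, S (x, y) <-> proj1_set x /\ proj2_set y.
Proof.
move=> simpleA a a' b Sab Sa'b neq.
pose pa : sub_alg subuniverse_proj1 := exist _ a (ex_intro _ b Sab).
pose pa' : sub_alg subuniverse_proj1 := exist _ a' (ex_intro _ b Sa'b).
have [_ /(_ _ fibre_link_congruence) [Hid|Hfull]] :
    simple (sub_alg subuniverse_proj1).
  by apply: simpleA; exists a, a'; split => //; [exists b | exists b].
  by case: neq; have /(_ (ex_intro _ b (conj Sab Sa'b))) := Hid pa pa' => -[].
move=> x y; split; first by move=> H; split; [exists y | exists x].
case=> [[c Hc] [a0 Ha0]].
have [d [Hd Hd']] := Hfull (exist _ x (ex_intro _ c Hc)) (exist _ a0 (ex_intro _ y Ha0)).
exact: rectS Hd Hd' Ha0.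
Qed.

End Goursat.

Section Dichotomy.
Variables (F : signature) (A B : algebra F) (S : prod_alg A B -> Prop).
Hypothesis HS : subuniverse _ S.

Lemma subuniverse_swap : subuniverse (prod_alg B A) (fun p => S (p.2, p.1)).
Proof. by move=> f args H; exact: (@HS f (fun k => ((args k).2, (args k).1)) H). Qed.

Lemma rectangular_swap : rectangular S -> rectangular (fun p : B * A => S (p.2, p.1)).
Proof. by move=> rectS b b' a a' /= H1 H2 H3; exact: rectS H3 H2 H1. Qed.

Lemma injective_rel_partial_iso_graph : inhabited B ->
  (forall a a' b, S (a, b) -> S (a', b) -> a = a') ->
  (forall a b b', S (a, b) -> S (a, b') -> b = b') ->
  partial_iso_graph (fun (a : A) (b : B) => S (a, b)).
Proof.
move=> [b0] inj functional.
have [h Hh] : exists h : A -> B, forall a, proj1_set S a -> S (a, h a).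
  apply: (@choice A B (fun a b => proj1_set S a -> S (a, b))) => a.
  by case: (classic (proj1_set S a)) => [[b Hb]|Hn]; [exists b | exists b0].
exists (proj1_set S), (proj2_set S), h; split; last first.
  move=> a b; split; first by move=> H; split; [exists b | exact: functional (Hh _ (ex_intro _ b H)) H].
  by case=> Ha <-; exact: Hh.
split.
- by split; [exact: subuniverse_proj1 | exact: subuniverse_proj2].
- by move=> x Hx; exists x; exact: Hh.
- by move=> x y Hx Hy E; apply: inj (Hh _ Hx) _; rewrite E; exact: Hh.
- by move=> y [x Hx]; exists x; [exists y | exact: functional (Hh _ (ex_intro _ y Hx)) Hx].
- move=> f args Hargs; apply: (functional (interp A f args)).
    exact: Hh (subuniverse_proj1 HS Hargs).
  exact: (@HS f (fun k => (args k, h (args k))) (fun k => Hh _ (Hargs k))).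
Qed.

Lemma rectangular_product_or_partial_iso : rectangular S ->
  subalgebras_simple A -> subalgebras_simple B -> inhabited B ->
  product_or_partial_iso S.
Proof.
move=> rectS simpleA simpleB inhB.
have product_of_projections : (forall x y, S (x, y) <-> proj1_set S x /\ proj2_set S y) ->
    product_or_partial_iso S.
  move=> E; left; exists (proj1_set S), (proj2_set S).
  by split; [exact: subuniverse_proj1 | exact: subuniverse_proj2 |].
case: (classic (exists a a' b, [/\ S (a, b), S (a', b) & a <> a'])).
  case=> a [a' [b [H1 H2 H3]]]; apply: product_of_projections.
  exact: rectangular_product_of_projections H1 H2 H3.
move=> inj.
case: (classic (exists a b b', [/\ S (a, b), S (a, b') & b <> b'])).
  case=> a [b [b' [H1 H2 H3]]]; apply: product_of_projections => x y.
  have := rectangular_product_of_projections subuniverse_swap (rectangular_swap rectS) simpleB H1 H2 H3 y x.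
  by move=> /= ->; split; case.
move=> functional; right; apply: injective_rel_partial_iso_graph => // [a a' b|a b b'] H H'.
  by apply: NNPP => n; apply: inj; exists a, a', b.
by apply: NNPP => n; apply: functional; exists a, b, b'.
Qed.

End Dichotomy.

Section Discriminator.
Variables (F : signature) (A : algebra F) (t : term F 'I_3).
Hypothesis discrA : is_discriminator (ternary_op A t).

Lemma discr_xxy (x y : A) : ternary_op A t x x y = y.
Proof. exact: (proj2 (discrA x x y)). Qed.

Lemma discr_xyz (x y z : A) : x <> y -> ternary_op A t x y z = x.
Proof. exact: (proj1 (discrA x y z)). Qed.

Lemma discr_xyx (x y : A) : ternary_op A t x y x = x.
Proof. by case: (classic (x = y)) => [->|/discr_xyz //]; rewrite discr_xxy. Qed.

Lemma discr_xyy (x y : A) : ternary_op A t x y y = x.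
Proof. by case: (classic (x = y)) => [->|/discr_xyz //]; rewrite discr_xxy. Qed.

Lemma discriminator_subalgebras_simple : subalgebras_simple A.
Proof.
move=> S HS [x [y [Sx Sy nxy]]]; split.
  by exists (exist _ x Sx), (exist _ y Sy) => /(f_equal sval).
move=> th Hth; case: (classic (exists p q, th p q /\ p <> q)); last first.
  by move=> Hn; left => p q H; apply: NNPP => npq; apply: Hn; exists p, q.
case=> p [q [Hpq npq]]; right.
have [thr ths tht _] := Hth.
have th_p u : th u p.
  have := congruence_ternary t Hth (thr p) Hpq (thr u).
  have -> : ternary_op (sub_alg HS) t p p u = u.
    by apply: sub_alg_inj; rewrite ternary_sub_alg discr_xxy.
  have -> // : ternary_op (sub_alg HS) t p q u = p.
  apply: sub_alg_inj; rewrite ternary_sub_alg discr_xyz // => E.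
  by apply: npq; exact: sub_alg_inj.
by move=> u v; apply: tht (th_p u) (ths _ _ (th_p v)).
Qed.

End Discriminator.

Definition discr_majority_term (F : signature) (t : term F 'I_3) :=
  subst (v3 (Var o0) t (Var o2)) t.

Lemma discr_majority (F : signature) (A : algebra F) t :
  is_discriminator (ternary_op A t) -> forall x y : A,
  [/\ ternary_op A (discr_majority_term t) x x y = x,
      ternary_op A (discr_majority_term t) x y x = x &
      ternary_op A (discr_majority_term t) y x x = x].
Proof.
move=> discrA x y; rewrite /ternary_op /discr_majority_term !eval_subst_v3 /=.
by rewrite -!/(ternary_op A t _ _ _) !(discr_xxy, discr_xyx, discr_xyy).
Qed.

Lemma discriminator_rectangular (F : signature) (A B : algebra F) t :
  is_discriminator (ternary_op A t) -> is_discriminator (ternary_op B t) ->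
  forall S, subuniverse (prod_alg A B) S -> rectangular S.
Proof.
move=> discrA discrB S HS a a' b b' H1 H2 H3.
have := subuniverse_ternary t HS H1 H2 H3.
by rewrite ternary_prod_alg /= (discr_xyy discrA) (discr_xxy discrB).
Qed.

Lemma cond1_cond4 (F : signature) (I : Type) (B : I -> algebra F) :
  (forall i, finite_algebra (B i)) -> cond1 B -> cond4 B.
Proof.
move=> finB [_ [t discrB]]; split.
  by exists (discr_majority_term t) => i; exact: discr_majority.
move=> i j S HS; apply: (rectangular_product_or_partial_iso HS).
- exact: discriminator_rectangular (discrB i) (discrB j) S HS.
- exact: discriminator_subalgebras_simple (discrB i).
- exact: discriminator_subalgebras_simple (discrB j).
- by case: (finB j) => -[x] _; constructor.
Qed.

Definition discriminator (A : Type) (x y z : A) :=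
  if excluded_middle_informative (x = y) then z else x.

Lemma discriminatorP (A : Type) : is_discriminator (@discriminator A).
Proof. by move=> x y z; rewrite /discriminator; case: excluded_middle_informative. Qed.

Lemma partial_iso_graph_eq (F : signature) (A B : algebra F) (r : A -> B -> Prop) :
  partial_iso_graph r -> forall a a' b b', r a b -> r a' b' -> (a = a' <-> b = b').
Proof.
case=> S1 [S2 [h [[_ _ inj _ _] Hr]]] a a' b b' /Hr [Sa <-] /Hr [Sa' <-].
by split=> [->|]; last exact: inj.
Qed.

Lemma discriminator_preserves (A B : Type) (r : A -> B -> Prop) :
  (forall a a' b b', r a b -> r a' b' -> (a = a' <-> b = b')) ->
  preserves (fun a : 'I_3 -> A => discriminator (a o0) (a o1) (a o2))
            (fun b : 'I_3 -> B => discriminator (b o0) (b o1) (b o2)) r.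
Proof.
move=> r_eq a b rab; have E := r_eq _ _ _ _ (rab o0) (rab o1).
rewrite /discriminator.
case: excluded_middle_informative => ab; case: excluded_middle_informative => ab'.
- exact: rab.
- by case: ab'; apply/E.
- by case: ab; apply/E.
- exact: rab.
Qed.

Lemma cond2_cond1 (F : signature) (I : Type) (B : I -> algebra F) :
  (forall i, finite_algebra (B i)) -> cond2 B -> cond1 B.
Proof.
move=> finB H2.
have [t Ht] := H2 3 (fun i a => discriminator (a o0) (a o1) (a o2))
  (fun i j r Hr => discriminator_preserves (partial_iso_graph_eq Hr)).
have discrB i : is_discriminator (ternary_op (B i) t).
  by move=> x y z; rewrite /ternary_op -Ht; exact: discriminatorP.
by split; [move=> i; split; [exact: finB | exists t] | exists t].
Qed.

Lemma partial_iso_graph_id (F : signature) (A : algebra F) (T : A -> Prop) :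
  subuniverse A T -> partial_iso_graph (fun x y : A => T x /\ x = y).
Proof. by move=> HT; exists T, T, id; split=> //; split=> // y Ty; exists y. Qed.

Lemma preserves_subprod (F : signature) (I : Type) (B : I -> algebra F) n
    (u : forall i, ('I_n -> B i) -> B i) :
  (forall i j (S : prod_alg (B i) (B j) -> Prop), subuniverse _ S -> product_or_partial_iso S) ->
  (forall i j (r : B i -> B j -> Prop), partial_iso_graph r -> preserves (u i) (u j) r) ->
  forall i j (S : prod_alg (B i) (B j) -> Prop), subuniverse _ S ->
    preserves (u i) (u j) (fun a b => S (a, b)).
Proof.
move=> dichotomy u_iso i j S HS.
have [[S1 [S2 [HS1 HS2 E]]] | //] := dichotomy i j S HS; last exact: u_iso.
have u_closed k (T : B k -> Prop) : subuniverse _ T -> forall a, (forall x, T (a x)) -> T (u k a).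
  move=> HT a Ta.
  exact: (proj1 (u_iso k k _ (partial_iso_graph_id HT) a a (fun x => conj (Ta x) erefl))).
move=> a b Sab; apply/E; split.
- by apply: u_closed HS1 _ _ => x; case/E: (Sab x).
- by apply: u_closed HS2 _ _ => x; case/E: (Sab x).
Qed.

Section Interpolation.
Variables (F : signature) (I : Type) (B : I -> algebra F) (n : nat).
Variable u : forall i, ('I_n -> B i) -> B i.
Arguments u : clear implicits.

Definition point := {i : I & 'I_n -> B i}.

Definition interpolates (t : term F 'I_n) (p : point) :=
  u (projT1 p) (projT2 p) = eval (B (projT1 p)) (projT2 p) t.

Lemma interpolates_majority (m : term F 'I_3) t0 t1 t2 p :
  (forall i (x y : B i), [/\ ternary_op (B i) m x x y = x, ternary_op (B i) m x y x = x &
                             ternary_op (B i) m y x x = x]) ->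
  [\/ interpolates t0 p /\ interpolates t1 p, interpolates t0 p /\ interpolates t2 p |
      interpolates t1 p /\ interpolates t2 p] ->
  interpolates (subst (v3 t0 t1 t2) m) p.
Proof.
case: p => i a majB; rewrite /interpolates /= eval_subst_v3.
case=> -[<- <-].
- by case: (majB i (u i a) (eval (B i) a t2)).
- by case: (majB i (u i a) (eval (B i) a t1)).
- by case: (majB i (u i a) (eval (B i) a t0)).
Qed.

Hypothesis u_subprod : forall i j (S : prod_alg (B i) (B j) -> Prop),
  subuniverse _ S -> preserves (u i) (u j) (fun a b => S (a, b)).

Lemma interpolate_two (p q : point) : exists t, interpolates t p /\ interpolates t q.
Proof.
case: p q => i a [j b].
pose S (c : prod_alg (B i) (B j)) := exists t, eval (B i) a t = c.1 /\ eval (B j) b t = c.2.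
have HS : subuniverse _ S.
  move=> f args /choice [ts Hts]; exists (App f ts).
  by split; congr (interp _ f); apply: functional_extensionality => k; case: (Hts k).
have [t [E1 E2]] := u_subprod HS (fun k => ex_intro _ (Var k) (conj erefl erefl)).
by exists t; split.
Qed.

Lemma interpolate_seq : majority_term B ->
  forall L : seq point, L <> [::] -> exists t, forall p, List.In p L -> interpolates t p.
Proof.
move=> [m majB] L; elim: {L}(size L) {-2}L (leqnn (size L)) => [|k IH].
  by case.
case=> [|p0 [|p1 [|p2 r]]] //= size_r _.
- by have [t [Ht _]] := interpolate_two p0 p0; exists t => p [<-|[]].
- by have [t [Ht0 Ht1]] := interpolate_two p0 p1; exists t => p [<-|[<-|[]]].
have [t0 H0] := IH (p1 :: p2 :: r) size_r (fun E => List.nil_cons (esym E)).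
have [t1 H1] := IH (p0 :: p2 :: r) size_r (fun E => List.nil_cons (esym E)).
have [t2 H2] := IH (p0 :: p1 :: r) size_r (fun E => List.nil_cons (esym E)).
(* Each point lies in at least two of the three shorter lists. *)
exists (subst (v3 t0 t1 t2) m) => p Hp; apply: interpolates_majority majB _.
case: Hp => [<-|[<-|[<-|Hr]]].
- by constructor 3; split; [apply: H1 | apply: H2]; left.
- by constructor 2; split; [apply: H0 | apply: H2]; [left | right; left].
- by constructor 1; split; [apply: H0 | apply: H1]; right; left.
- by constructor 1; split; [apply: H0 | apply: H1]; do 2 right.
Qed.

End Interpolation.

Lemma mem_In (T : eqType) (x : T) (s : seq T) : x \in s -> List.In x s.
Proof. by elim: s => //= y s IH; rewrite inE => /orP [/eqP ->|/IH]; [left | right]. Qed.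

Lemma finite_functionallisted (A : Type) (n : nat) :
  (exists (k : nat) (e : 'I_k -> A), forall x, exists i, e i = x) ->
  exists L : seq ('I_n -> A), forall a, List.In a L.
Proof.
case=> k [e /choice [g Hg]].
exists (List.map (fun f : {ffun 'I_n -> 'I_k} => e \o f) (enum {ffun 'I_n -> 'I_k})) => a.
have -> : a = e \o [ffun x => g (a x)].
  by apply: functional_extensionality => x /=; rewrite ffunE Hg.
exact/List.in_map/mem_In/mem_enum.
Qed.

Lemma points_listed (F : signature) (I : finType) (B : I -> algebra F) (n : nat) :
  (forall i, finite_algebra (B i)) -> exists L : seq (point B n), forall p, List.In p L.
Proof.
move=> finB.
pose Ls i := proj1_sig (constructive_indefinite_description _ (finite_functionallisted n (proj2 (finB i)))).
have HLs i : forall a, List.In a (Ls i) :=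
  proj2_sig (constructive_indefinite_description _ (finite_functionallisted n (proj2 (finB i)))).
exists (List.flat_map (fun i => List.map (existT _ i) (Ls i)) (enum I)) => -[i a].
apply/List.in_flat_map; exists i; split; first exact/mem_In/mem_enum.
exact/List.in_map/HLs.
Qed.

Lemma cond4_cond2 (F : signature) (I : finType) (B : I -> algebra F) :
  (forall i, finite_algebra (B i)) -> inhabited I -> cond4 B -> cond2 B.
Proof.
move=> finB [i0] [majB dichotomy] n u u_iso.
have [L HL] := points_listed n finB.
have L_nil : L <> [::].
  by case: (finB i0) => -[x0] _ E; have := HL (existT _ i0 (fun _ => x0)); rewrite E.
have [t Ht] := interpolate_seq (preserves_subprod dichotomy u_iso) majB L_nil.
by exists t => i a; exact: (Ht (existT _ i a) (HL _)).
Qed.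

Section Congruences.
Variables (F : signature) (C : algebra F).

Definition relcomp (al be : C -> C -> Prop) (x y : C) := exists z, al x z /\ be z y.

Lemma cong_meet_congruence al be : congruence C al -> congruence C be ->
  congruence C (cong_meet al be).
Proof.
move=> [ar asy atr ac] [br bsy btr bc]; split.
- by move=> x; split.
- by move=> x y [/asy ? /bsy ?]; split.
- by move=> x y z [? ?] [? ?]; split; [apply: atr | apply: btr]; eassumption.
- by move=> f a b H; split; [apply: ac => k; case: (H k) | apply: bc => k; case: (H k)].
Qed.

Hypothesis permC : cong_permutable C.

Lemma relcomp_congruence al be : congruence C al -> congruence C be ->
  congruence C (relcomp al be).
Proof.
move=> Ha Hb; have [ar asy atr ac] := Ha; have [br bsy btr bc] := Hb; split.
- by move=> x; exists x.
- move=> x y [z [H1 H2]]; apply/(permC Ha Hb); exists z; split; [exact: bsy | exact: asy].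
- move=> x y z [a [H1 H2]] [b [K1 K2]].
  have [c [L1 L2]] : relcomp al be a b by apply/(permC Ha Hb); exists y.
  by exists c; split; [exact: atr H1 L1 | exact: btr L2 K2].
- move=> f a b /choice [zs Hz]; exists (interp C f zs).
  by split; [apply: ac => k; case: (Hz k) | apply: bc => k; case: (Hz k)].
Qed.

Lemma cong_join_relcomp al be : congruence C al -> congruence C be ->
  forall x y, cong_join C al be x y -> relcomp al be x y.
Proof.
move=> Ha Hb x y; apply; first exact: relcomp_congruence.
- by move=> u v H; exists v; split => //; case: Hb.
- by move=> u v H; exists u; split => //; case: Ha.
Qed.

Lemma majority_cong_distributive (m : term F 'I_3) :
  (forall x y : C, [/\ ternary_op C m x x y = x, ternary_op C m x y x = x &
                       ternary_op C m y x x = x]) ->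
  cong_distributive C.
Proof.
move=> majC al be ga Ha Hb Hg x y; split; last first.
  move=> Hj; split; first by apply: Hj => // u v [].
  by move=> th Hth Kb Kg; apply: Hj => // u v [_ H]; [exact: Kb | exact: Kg].
case=> al_xy /(cong_join_relcomp Hb Hg) [z [be_xz ga_zy]] th [_ _ thtr _] Kb Kg.
have [ar asy atr _] := Ha; have [br _ _ _] := Hb; have [gr _ _ _] := Hg.
pose w := ternary_op C m x z y.
(* The median [w] is (al /\ be)-related to [x] and (al /\ ga)-related to [y]. *)
have al_wx : al w x.
  have := congruence_ternary m Ha (ar x) (ar z) (asy _ _ al_xy).
  by case: (majC x z) => _ ->.
have be_xw : be x w.
  have := congruence_ternary m Hb (br x) be_xz (br y).
  by case: (majC x y) => ->.
have ga_wy : ga w y.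
  have := congruence_ternary m Hg (gr x) ga_zy (gr y).
  by case: (majC y x) => _ _ ->.
apply: (thtr _ w); first by apply: Kb; split => //; exact: asy.
by apply: Kg; split => //; exact: atr al_wx al_xy.
Qed.

End Congruences.

Lemma maltsev_cong_permutable (F : signature) (C : algebra F) (t : term F 'I_3) :
  (forall x y : C, ternary_op C t x y y = x) -> (forall x y : C, ternary_op C t x x y = y) ->
  cong_permutable C.
Proof.
move=> t_xyy t_xxy.
suff comm al be : congruence C al -> congruence C be ->
    forall x y, relcomp al be x y -> relcomp be al x y.
  by move=> al be Ha Hb x y; split; apply: comm.
move=> Ha Hb x y [z [al_xz be_zy]]; exists (ternary_op C t x z y); split.
- have [br bsy _ _] := Hb.
  by have := congruence_ternary t Hb (br x) (bsy _ _ be_zy) (br y); rewrite t_xyy.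
- have [ar _ _ _] := Ha.
  by have := congruence_ternary t Ha al_xz (ar z) (ar y); rewrite t_xxy.
Qed.

Lemma in_variety_gen_ternary (F : signature) (I : Type) (B : I -> algebra F) (C : algebra F)
    (m : term F 'I_3) (a b c d : 'I_3) : in_variety_gen B C ->
  (forall i (v : 'I_3 -> B i), ternary_op (B i) m (v a) (v b) (v c) = v d) ->
  forall v : 'I_3 -> C, ternary_op C m (v a) (v b) (v c) = v d.
Proof.
move=> CinV idB v.
have idC : satisfies C (subst (v3 (Var a) (Var b) (Var c)) m) (Var d).
  by apply: CinV => i w; rewrite eval_subst_v3; exact: idB.
by have := idC v; rewrite eval_subst_v3.
Qed.

Lemma cond1_cond3 (F : signature) (I : Type) (B : I -> algebra F) : cond1 B -> cond3 B.
Proof.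
move=> [_ [t discrB]]; split => [C CinV|i]; last exact: discriminator_subalgebras_simple.
have transfer a b c d := @in_variety_gen_ternary F I B C _ a b c d CinV.
have permC : cong_permutable C.
  apply: (@maltsev_cong_permutable _ _ t) => x y.
  - by apply: (transfer _ o0 o1 o1 o0 _ (v3 x y x)) => i v; rewrite (discr_xyy (discrB i)).
  - by apply: (transfer _ o0 o0 o1 o1 _ (v3 x y x)) => i v; rewrite (discr_xxy (discrB i)).
split=> //; apply: (majority_cong_distributive permC (m := discr_majority_term t)) => x y.
split.
- by apply: (transfer _ o0 o0 o1 o0 _ (v3 x y x)) => i w; case: (discr_majority (discrB i) (w o0) (w o1)).
- by apply: (transfer _ o0 o1 o0 o0 _ (v3 x y x)) => i w; case: (discr_majority (discrB i) (w o0) (w o1)).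
- by apply: (transfer _ o1 o0 o0 o0 _ (v3 x y x)) => i w; case: (discr_majority (discrB i) (w o0) (w o1)).
Qed.

Lemma kernel_congruence (F : signature) (C D : algebra F) (g : C -> D) :
  (forall f args, g (interp C f args) = interp D f (fun k => g (args k))) ->
  congruence C (fun p q => g p = g q).
Proof.
move=> g_hom; split=> //; first by move=> x y z ->.
by move=> f a b E; rewrite !g_hom; congr (interp D f); apply: functional_extensionality.
Qed.

Definition principal_cong (F : signature) (C : algebra F) (p q : C) (r s : C) : Prop :=
  forall th, congruence C th -> th p q -> th r s.

Lemma principal_cong_congruence (F : signature) (C : algebra F) (p q : C) :
  congruence C (principal_cong p q).
Proof.
split.
- by move=> x th [thr _ _ _].
- by move=> x y H th Hth Hpq; case: Hth (H th Hth Hpq) => _ ths _ _ /ths.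
- by move=> x y z H1 H2 th Hth Hpq; case: (Hth) (H1 th Hth Hpq) (H2 th Hth Hpq) => _ _ tht _; apply: tht.
- by move=> f a b H th Hth Hpq; case: (Hth) => _ _ _ thc; apply: thc => k; exact: H.
Qed.

Section TermOperations.
Variables (F : signature) (I : Type) (B : I -> algebra F).

(* The 3-generated free algebra of the variety generated by B, realised as the
   algebra of ternary term operations of the family B. *)
Definition term_op (f : forall i, ('I_3 -> B i) -> B i) : Prop :=
  exists t : term F 'I_3, forall i a, f i a = eval (B i) a t.

Lemma term_op_interp f0 (args : 'I_(arity f0) -> {f | term_op f}) :
  term_op (fun i a => interp (B i) f0 (fun k => sval (args k) i a)).
Proof.
have /choice [ts Hts] := fun k => proj2_sig (args k).
exists (App f0 ts) => i a /=.
by congr (interp _ f0); apply: functional_extensionality => k; exact: Hts.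
Qed.

Definition term_ops_alg : algebra F :=
  Algebra {f | term_op f} (fun f0 args => exist _ _ (term_op_interp args)).

Lemma eval_term_ops_alg X (v : X -> term_ops_alg) t i a :
  sval (eval term_ops_alg v t) i a = eval (B i) (fun k => sval (v k) i a) t.
Proof.
elim: t => [x|f ts IH] //=.
by congr (interp _ f); apply: functional_extensionality => k; rewrite IH.
Qed.

Lemma term_ops_in_variety_gen : in_variety_gen B term_ops_alg.
Proof.
move=> n s t Hst v.
apply: (eq_sig_hprop (fun f => proof_irrelevance (term_op f))).
apply: functional_extensionality_dep => i; apply: functional_extensionality => a.
by rewrite !eval_term_ops_alg; exact: Hst.
Qed.

Lemma term_op_proj (k : 'I_3) : term_op (fun i a => a k).
Proof. by exists (Var k). Qed.

Definition term_proj (k : 'I_3) : term_ops_alg := exist term_op _ (term_op_proj k).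

End TermOperations.

Lemma cong_distributive_permutable_majority_term (F : signature) (I : Type)
    (B : I -> algebra F) :
  cong_distributive (term_ops_alg B) -> cong_permutable (term_ops_alg B) -> majority_term B.
Proof.
move=> distr perm; pose x := term_proj B.
have Hal := principal_cong_congruence (x o0) (x o2).
have Hbe := principal_cong_congruence (x o0) (x o1).
have Hga := principal_cong_congruence (x o1) (x o2).
have x02 : cong_meet (principal_cong (x o0) (x o2))
    (cong_join _ (principal_cong (x o0) (x o1)) (principal_cong (x o1) (x o2))) (x o0) (x o2).
  split=> // th [_ _ tht _] Kbe Kga.
  by apply: (tht _ (x o1)); [apply: Kbe | apply: Kga].
have [w [[_ be_0w] [al_w2 ga_w2]]] := cong_join_relcomp perm
  (cong_meet_congruence Hal Hbe) (cong_meet_congruence Hal Hga) ((distr _ _ _ Hal Hbe Hga _ _).1 x02).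
have [m Hm] := proj2_sig w.
have eval_at i a : congruence (term_ops_alg B) (fun p q => sval p i a = sval q i a).
  exact (@kernel_congruence _ (term_ops_alg B) (B i) (fun p => sval p i a) (fun f args => erefl)).
exists m => i y z; rewrite /ternary_op -!Hm; split.
- by rewrite -(be_0w _ (eval_at i (v3 y y z)) erefl).
- by rewrite (al_w2 _ (eval_at i (v3 y z y)) erefl).
- by rewrite (ga_w2 _ (eval_at i (v3 z y y)) erefl).
Qed.

Lemma cong_permutable_rectangular (F : signature) (A B : algebra F)
    (S : prod_alg A B -> Prop) (HS : subuniverse _ S) :
  cong_permutable (sub_alg HS) -> rectangular S.
Proof.
move=> perm a a' b b' Sab Sa'b Sa'b'.
have ker1 := @kernel_congruence _ (sub_alg HS) A (fun p => (sval p).1) (fun f args => erefl).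
have ker2 := @kernel_congruence _ (sub_alg HS) B (fun p => (sval p).2) (fun f args => erefl).
have [[[c d] Scd] [/= -> <-]] := (perm _ _ ker2 ker1 (exist _ _ Sab) (exist _ _ Sa'b')).1
  (ex_intro _ (exist _ _ Sa'b) (conj erefl erefl)).
exact: Scd.
Qed.

Lemma subprod_in_variety_gen (F : signature) (I : Type) (B : I -> algebra F) i j
    (S : prod_alg (B i) (B j) -> Prop) (HS : subuniverse _ S) : in_variety_gen B (sub_alg HS).
Proof.
by move=> n s t Hst v; apply: sub_alg_inj; rewrite !eval_sub_alg !eval_prod_alg; congr pair; exact: Hst.
Qed.

Lemma cond3_cond4 (F : signature) (I : Type) (B : I -> algebra F) :
  (forall i, finite_algebra (B i)) -> cond3 B -> cond4 B.
Proof.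
move=> finB [CDP simpleB]; split.
  by case: (CDP _ (@term_ops_in_variety_gen _ _ B)); exact: cong_distributive_permutable_majority_term.
move=> i j S HS; apply: (rectangular_product_or_partial_iso HS).
- by apply: cong_permutable_rectangular; case: (CDP _ (@subprod_in_variety_gen _ _ B _ _ _ HS)).
- exact: simpleB.
- exact: simpleB.
- by case: (finB j) => -[x] _; constructor.
Qed.

Theorem theorem3p2 (F : signature) (I : finType) (B : I -> algebra F)
    (HBfin : forall i, finite_algebra (B i)) (HI : inhabited I) :
  [/\ cond1 B <-> cond2 B, cond1 B <-> cond3 B & cond1 B <-> cond4 B].
Proof.
have c14 : cond1 B -> cond4 B := cond1_cond4 HBfin.
have c42 : cond4 B -> cond2 B := cond4_cond2 HBfin HI.
have c21 : cond2 B -> cond1 B := cond2_cond1 HBfin.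
have c13 : cond1 B -> cond3 B := @cond1_cond3 F I B.
have c34 : cond3 B -> cond4 B := cond3_cond4 HBfin.
split; split=> H.
- exact: c42 (c14 H).
- exact: c21 H.
- exact: c13 H.
- exact: c21 (c42 (c34 H)).
- exact: c14 H.
- exact: c21 (c42 H).
Qed.
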